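(* Let $G$ be the cycle with vertices $u,v,w$ and edges $uv,vw,wu$, and let $H$ have OD-pairs $(u,w),(u,v),(w,v)$. Take two classes: class 1 consists of $I_{(u,v)}$ with $\lambda(I_{(u,v)})=1.5$; class 2 consists of $I_{(u,w)}\cup I_{(w,v)}$ with $\lambda(I_{(u,w)})=\lambda(I_{(w,v)})=1$. Class 1 costs: $c_{(u,w)}(x)=x$, $c_{(w,v)}(x)=x+48$, $c_{(u,v)}(x)=24x+7$. Class 2 costs: $c_{(u,w)}(x)=22x$, $c_{(w,v)}(x)=22x$, $c_{(w,u)}(x)=x$, $c_{(u,v)}(x)=x+26$, $c_{(v,w)}(x)=x$ (costs on arcs not used by any route of a class are arbitrary nonnegative continuous strictly increasing). Let $\sigma$ have class 1 users on the route $u\to v$ and class 2 users on the routes $u\to w$ and $w\to v$ respectively; let $\hat\sigma$ have class 1 users on the route $u\to w\to v$, users of $I_{(u,w)}$ on $u\to v\to w$ and users of $I_{(w,v)}$ on $w\to u\to v$. Then $\sigma$ and $\hat\sigma$ are both equilibria, and they induce different flows (e.g. on arc $(u,v)$ the flows are $1.5$ and $2$). In particular multiple equilibrium flows can occur on a ring with only two classes of users.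
   Context: Model: the directed version of $G$ has the six arcs $(u,v),(v,u),(v,w),(w,v),(u,w),(w,u)$; routes of an OD-pair $(o,d)$ are the directed $(o,d)$-paths. Users form a bounded interval with Lebesgue measure $\lambda$; the flow on an arc is the measure of users whose route contains it; a user's cost for a route is the sum over its arcs of his (class-dependent) cost function evaluated at the arc flow; an equilibrium is a strategy profile in which every user's route has minimal cost among the routes of his OD-pair. *)

From Stdlib Require Import Reals List.
Import ListNotations.
Open Scope R_scope.

Inductive vertex := U | V | W.

(* Arcs of the directed version of G: ordered pairs of distinct vertices
   (G is the triangle, so these are exactly the six arcs). *)
Definition arc := (vertex * vertex)%type.
Definition is_arc (a : arc) : Prop := fst a <> snd a.

Fixpoint arcs_of (p : list vertex) : list arc :=
  match p with
  | x :: ((y :: _) as t) => (x, y) :: arcs_of t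
  | _ => nil
  end.

Definition is_path (o d : vertex) (p : list vertex) : Prop :=
  p <> nil /\ hd o p = o /\ last p o = d /\ NoDup p /\
  Forall is_arc (arcs_of p).

Inductive uclass := Class1 | Class2.

(* The users form a bounded interval split into the subintervals
   I_(u,v) (class 1), I_(u,w) and I_(w,v) (class 2).  Strategy profiles
   considered here are constant on each of these blocks, so we index
   users by their block. *)
Inductive block := B1uv | B2uw | B2wv.

Definition class_of (b : block) : uclass :=
  match b with B1uv => Class1 | _ => Class2 end.

Definition od_of (b : block) : vertex * vertex :=
  match b with B1uv => (U, V) | B2uw => (U, W) | B2wv => (W, V) end.

Definition mass (b : block) : R :=
  match b with B1uv => 3/2 | B2uw => 1 | B2wv => 1 end.

Definition blocks : list block := [B1uv; B2uw; B2wv].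

Definition profile := block -> list vertex.



Definition vertex_eq_dec (x y : vertex) : {x = y} + {x <> y}.
Proof. decide equality. Defined.

Definition arc_eq_dec (a b : arc) : {a = b} + {a <> b}.
Proof. decide equality; apply vertex_eq_dec. Defined.

Definition flow (s : profile) (a : arc) : R :=
  fold_right Rplus 0
    (map (fun b => mass b * (if in_dec arc_eq_dec a (arcs_of (s b)) then 1 else 0))
         blocks).

Definition costs := uclass -> arc -> R -> R.

Definition route_cost (c : costs) (k : uclass) (s : profile) (p : list vertex) : R :=
  fold_right Rplus 0 (map (fun a => c k a (flow s a)) (arcs_of p)).

Definition equilibrium (c : costs) (s : profile) : Prop :=
  forall b : block,
    is_path (fst (od_of b)) (snd (od_of b)) (s b) /\
    forall p, is_path (fst (od_of b)) (snd (od_of b)) p ->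
      route_cost c (class_of b) s (s b) <= route_cost c (class_of b) s p.

Definition sigma_prof : profile := fun b =>
  match b with B1uv => [U; V] | B2uw => [U; W] | B2wv => [W; V] end.

Definition sigma_hat : profile := fun b =>
  match b with B1uv => [U; W; V] | B2uw => [U; V; W] | B2wv => [W; U; V] end.

Definition admissible_cost (f : R -> R) : Prop :=
  (forall x, 0 <= x -> 0 <= f x) /\ continuity f /\
  (forall x y, x < y -> f x < f y).

From Stdlib Require Import Reals List Lra.
Import ListNotations.
Open Scope R_scope.

(* In the directed triangle an (o,d)-path with o <> d is
   either the direct arc [o; d] or the detour [o; t; d] through the third
   vertex t.  Hence a profile is an equilibrium as soon as every block uses
   one of these two candidate routes and its cost is at most the cost of
   both candidates (lemma [equilibrium_of_candidates]).  For the two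
   profiles [sigma_prof] and [sigma_hat] the flows are explicit numbers, so
   every candidate cost is an explicit number obtained by rewriting with the
   given affine cost functions; the required inequalities are then linear
   arithmetic. *)

(* The vertex of the triangle different from [o] and [d] (arbitrary when
   [o = d]). *)
Definition third (o d : vertex) : vertex :=
  match o, d with
  | U, V | V, U => W
  | U, W | W, U => V
  | _, _ => U
  end.

Definition candidate_routes (o d : vertex) : list (list vertex) :=
  [[o; d]; [o; third o d; d]].

(* Every (o,d)-path of the triangle with o <> d is a candidate route: a
   path without repeated vertices has at most three vertices, and a middle
   vertex must differ from both endpoints. *)
Lemma path_is_candidate (o d : vertex) (p : list vertex) :
  o <> d -> is_path o d p -> In p (candidate_routes o d).
Proof.
  intros Hod [Hn [Hh [Hl [Hnd _]]]].
  destruct p as [|a [|b [|e [|f t]]]]; simpl in *; subst.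
  - congruence.
  - congruence.
  - left; reflexivity.
  - right; left.
    inversion Hnd as [|? ? Ha Hnd']; inversion Hnd' as [|? ? Hb _]; subst.
    repeat match goal with x : vertex |- _ => destruct x end;
    simpl in *; intuition congruence.
  - exfalso.
    inversion Hnd as [|? ? Ha H1]; inversion H1 as [|? ? Hb H2];
    inversion H2 as [|? ? He _]; subst.
    repeat match goal with x : vertex |- _ => destruct x end;
    simpl in *; tauto.
Qed.

Lemma candidate_is_path (o d : vertex) (p : list vertex) :
  o <> d -> In p (candidate_routes o d) -> is_path o d p.
Proof.
  intros Hod Hp.
  destruct o, d; try congruence; simpl in Hp;
    destruct Hp as [<- | [<- | []]];
    repeat split; try discriminate;
    repeat constructor; simpl; try (unfold is_arc; simpl; discriminate);
    intuition discriminate.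
Qed.

Lemma od_distinct (b : block) : fst (od_of b) <> snd (od_of b).
Proof. destruct b; discriminate. Qed.

Lemma equilibrium_of_candidates (c : costs) (s : profile) :
  (forall b, let routes := candidate_routes (fst (od_of b)) (snd (od_of b)) in
     In (s b) routes /\
     Forall (fun p => route_cost c (class_of b) s (s b)
                      <= route_cost c (class_of b) s p) routes) ->
  equilibrium c s.
Proof.
  intros Hs b; destruct (Hs b) as [Hin Hmin]; split.
  - exact (candidate_is_path _ _ _ (od_distinct b) Hin).
  - intros p Hp.
    apply (proj1 (Forall_forall _ _) Hmin).
    exact (path_is_candidate _ _ _ (od_distinct b) Hp).
Qed.

Theorem mainTheorem16 (c : costs)
  (Hadm : forall k a, is_arc a -> admissible_cost (c k a))
  (H1uw : forall x, c Class1 (U, W) x = x)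
  (H1wv : forall x, c Class1 (W, V) x = x + 48)
  (H1uv : forall x, c Class1 (U, V) x = 24 * x + 7)
  (H2uw : forall x, c Class2 (U, W) x = 22 * x)
  (H2wv : forall x, c Class2 (W, V) x = 22 * x)
  (H2wu : forall x, c Class2 (W, U) x = x)
  (H2uv : forall x, c Class2 (U, V) x = x + 26)
  (H2vw : forall x, c Class2 (V, W) x = x) :
  equilibrium c sigma_prof /\ equilibrium c sigma_hat /\
  flow sigma_prof (U, V) = 3/2 /\ flow sigma_hat (U, V) = 2 /\
  flow sigma_prof <> flow sigma_hat.
Proof.
  assert (Fsigma : flow sigma_prof (U, V) = 3/2) by (unfold flow; simpl; lra).
  assert (Fhat : flow sigma_hat (U, V) = 2) by (unfold flow; simpl; lra).
  split; [|split; [|split; [exact Fsigma|split; [exact Fhat|]]]].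
  (* With explicit flows, every candidate cost is an explicit affine value. *)
  1-2: apply equilibrium_of_candidates; intros []; simpl;
    (split; [tauto|]); repeat apply Forall_cons; try apply Forall_nil;
    unfold route_cost, flow; simpl;
    rewrite ?H1uw, ?H1wv, ?H1uv, ?H2uw, ?H2wv, ?H2wu, ?H2uv, ?H2vw; lra.
  intros Eflow; rewrite Eflow, Fhat in Fsigma; lra.
Qed.
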